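(* Let $k\ge1$, let $n_k\in\{0,1\}^k$, and let $\eta=\alpha\circ\tau_{n_k}\colon\Sigma\to\Sigma$. Then: (i) $\eta$ is continuous; (ii) $\underline0$ is a periodic point of $\eta$ of period $2^k$, and its $\eta$-orbit intersects the cylinder $\Sigma_{n_k}$ in exactly one point, namely $n_k\underline0$; (iii) every point $\underline n\in B$ is $\eta$-periodic; either it is a $2^k$-periodic point lying in the $\eta$-orbit of $\underline0$, or it is an $m\cdot2^k$-periodic point of $\eta$ for some positive integer $m$.
   Context: $\Sigma=\{0,1\}^{\mathbb N}$ with the product topology. For a $k$-block $n_k\in\{0,1\}^k$, the cylinder $\Sigma_{n_k}$ is the set of sequences beginning with $n_k$; $n_k\underline0$ denotes the concatenation of $n_k$ with the constant sequence $\underline0=000\dots$, and $\underline1=111\dots$. $B$ is the set of sequences that are eventually constant (eventually all $0$ or eventually all $1$). The adding machine $\alpha\colon\Sigma\to\Sigma$ adds $1\underline0=1000\dots$ with carry to the right (the first coordinate being least significant), i.e. $\alpha(x)=x+1\underline0$ in the 2-adic integers; e.g. $\underline1\mapsto\underline0\mapsto1\underline0\mapsto01\underline0\mapsto11\underline0$. $\tau_{n_k}\colon\Sigma\to\Sigma$ is the identity on sequences not in $\Sigma_{n_k}$, and on $\Sigma_{n_k}$ keeps the first $k$ symbols and swaps $0\leftrightarrow1$ in all remaining coordinates, e.g. $\tau_{n_k}(n_k110100\dots)=n_k001011\dots$. *)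

From mathcomp Require Import all_boot.
Set Implicit Arguments. Unset Strict Implicit. Unset Printing Implicit Defensive.

(* Sigma = {0,1}^N, with 0 = false, 1 = true; coordinate 0 is the first one. *)
Definition Sigma := nat -> bool.

Definition zeroS : Sigma := fun _ => false.
Definition oneS : Sigma := fun _ => true.

Definition in_cyl (k : nat) (w : k.-tuple bool) (x : Sigma) : bool :=
  all (fun i => x i == nth false w i) (iota 0 k).

Definition block_zero (k : nat) (w : k.-tuple bool) : Sigma :=
  fun i => if i < k then nth false w i else false.

(* Adding machine: x + 1000... in the 2-adic integers, carry to the right.
   Coordinate i flips exactly when all coordinates j < i are 1. *)
Definition alpha (x : Sigma) : Sigma :=
  fun i => if all x (iota 0 i) then ~~ x i else x i.

Definition tau (k : nat) (w : k.-tuple bool) (x : Sigma) : Sigma :=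
  if in_cyl w x then (fun i => if i < k then x i else ~~ x i) else x.

(* Continuity of f : Sigma -> Sigma for the product topology (the cylinders
   form a base): every finite prefix of f x is determined by a finite prefix
   of x. *)
Definition continuous_Sigma (f : Sigma -> Sigma) : Prop :=
  forall (x : Sigma) (N : nat), exists M : nat,
    forall y : Sigma, (forall i, i < M -> y i = x i) ->
      forall i, i < N -> f y i = f x i.

Definition periodic_point_of_period (f : Sigma -> Sigma) (x : Sigma) (p : nat) : Prop :=
  0 < p /\ iter p f x = x /\ (forall q, 0 < q -> q < p -> iter q f x <> x).

Definition periodic_point (f : Sigma -> Sigma) (x : Sigma) : Prop :=
  exists p, 0 < p /\ iter p f x = x.

Definition in_eta_orbit (f : Sigma -> Sigma) (x y : Sigma) : Prop :=
  exists j : nat, y = iter j f x.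

Definition eventually_constant (x : Sigma) : Prop :=
  exists (N : nat) (b : bool), forall i, N <= i -> x i = b.

From mathcomp Require Import all_boot zify.
From Stdlib Require Import FunctionalExtensionality Classical.

(* Split x in Sigma into its first k symbols, read as a binary number p < 2^k,
   and its tail t.  One step of eta adds 1 to p modulo 2^k; the tail is negated
   when p is the value c of w, and receives the carry (alpha) when p = 2^k - 1.
   Starting from p = 0, a round of 2^k steps therefore maps t to alpha (negS t),
   which is the 2-adic negation t |-> -t, an involution.  Since eta is
   bijective, every point x lies p steps after a point with prefix 0, where p
   is the prefix of x, so eta^(2^(k+1)) is the identity, while the prefix only
   returns after multiples of 2^k steps.  Hence every point of Sigma,
   eventually constant or not, has least period 2^k or 2^(k+1).  The orbit of
   0 has period 2^k because alpha (negS 0) = alpha 1 = 0, and within one round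
   its prefix equals c only at step c, where the point is w followed by 0s. *)

Fixpoint prefix_val (n : nat) (x : Sigma) : nat :=
  if n is n'.+1 then prefix_val n' x + 2 ^ n' * x n' else 0.

Definition shift (k : nat) (x : Sigma) : Sigma := fun i => x (k + i).

Definition negS (x : Sigma) : Sigma := fun i => ~~ x i.

Lemma iota0S n : iota 0 n.+1 = rcons (iota 0 n) n.
Proof. by rewrite -addn1 iotaD cats1. Qed.

Lemma eq_all_iota0 n (x y : Sigma) : (forall i, i < n -> x i = y i) ->
  all x (iota 0 n) = all y (iota 0 n).
Proof.
by move=> eq_xy; apply: eq_in_all => i; rewrite mem_iota add0n => /andP[_ /eq_xy].
Qed.

Lemma prefix_val_lt n x : prefix_val n x < 2 ^ n.
Proof. by elim: n => //= n IH; rewrite expnS; case: (x n) => /=; lia. Qed.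

Lemma eq_prefix_val n x y :
  (forall i, i < n -> x i = y i) -> prefix_val n x = prefix_val n y.
Proof. by elim: n => //= n IH eq_xy; rewrite IH ?eq_xy // => i lt_in; apply: eq_xy; lia. Qed.

Lemma prefix_val_inj n x y :
  prefix_val n x = prefix_val n y -> forall i, i < n -> x i = y i.
Proof.
elim: n => //= n IH eq_xy i lt_in.
have lt_x := prefix_val_lt n x; have lt_y := prefix_val_lt n y.
have [eq_pre eq_n] : prefix_val n x = prefix_val n y /\ x n = y n.
  by move: eq_xy; case: (x n); case: (y n) => /=; lia.
have [-> //|ne_in] := eqVneq i n.
by apply: IH => //; lia.
Qed.

Lemma prefix_shift_ext k x y :
  prefix_val k x = prefix_val k y -> shift k x = shift k y -> x = y.
Proof.
move=> /prefix_val_inj eq_pre eq_sh; apply: functional_extensionality => i.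
have [lt_ik|le_ki] := ltnP i k; first exact: eq_pre.
by rewrite -(subnKC le_ki); apply: (congr1 (fun t => t (i - k)) eq_sh).
Qed.

Lemma all_prefixE n x : all x (iota 0 n) = (prefix_val n x == 2 ^ n - 1).
Proof.
elim: n => // n IH; rewrite iota0S all_rcons /= IH.
have := prefix_val_lt n x; have := expn_gt0 2 n; rewrite expnS.
by case: (x n) => /= *; apply/idP/eqP; lia.
Qed.

Lemma prefix_val_alpha n x : prefix_val n (alpha x) = (prefix_val n x).+1 %% 2 ^ n.
Proof.
elim: n => //= n ->; rewrite {1}/alpha all_prefixE expnS.
have lt_x := prefix_val_lt n x; have K_gt0 : 0 < 2 ^ n by rewrite expn_gt0.
have [->|ne] := eqVneq (prefix_val n x) (2 ^ n - 1).
  rewrite (_ : (2 ^ n - 1).+1 = 2 ^ n); last by lia.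
  rewrite modnn add0n; case: (x n) => /=; last by rewrite modn_small; lia.
  by rewrite muln1 (_ : (2 ^ n - 1 + _).+1 = 2 * 2 ^ n) ?modnn ?muln0; lia.
move/eqP: ne => ne; rewrite !modn_small; case: (x n) => /=; lia.
Qed.

Lemma prefix_val_zero n : prefix_val n zeroS = 0.
Proof. by elim: n => //= n ->; rewrite muln0. Qed.

Lemma shift_alpha k x :
  shift k (alpha x) = if all x (iota 0 k) then alpha (shift k x) else shift k x.
Proof.
apply: functional_extensionality => i.
rewrite /shift /alpha iotaD all_cat add0n -[in iota k](addn0 k) iotaDl all_map.
by case: (all x (iota 0 k)).
Qed.

(* In the 2-adic integers negS x = -1 - x, so alpha (negS x) = -x. *)
Lemma alpha_negS_involutive : involutive (alpha \o negS).
Proof.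
move=> t /=; set u := negS (alpha (negS t)).
have u_def j : u j = if all (negS t) (iota 0 j) then ~~ t j else t j.
  by rewrite /u /negS /alpha; case: all; rewrite ?negbK.
have all_u i : all u (iota 0 i) = all (negS t) (iota 0 i).
  elim: i => // i IH; rewrite !iota0S !all_rcons IH u_def.
  by case: all; rewrite ?andbF ?andbT.
apply: functional_extensionality => i.
by rewrite /alpha all_u u_def; case: all; rewrite ?negbK.
Qed.

Lemma period_of_dvd (f : Sigma -> Sigma) x p : 0 < p -> iter p f x = x ->
  (forall q, iter q f x = x -> p %| q) -> periodic_point_of_period f x p.
Proof.
move=> p_gt0 fix_p dvd_fix; do 2!split=> //.
by move=> q q_gt0 lt_qp /dvd_fix /(dvdn_leq q_gt0); rewrite leqNgt lt_qp.
Qed.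

Lemma period_or_double (f : Sigma -> Sigma) x p : 0 < p -> iter (2 * p) f x = x ->
  (forall q, iter q f x = x -> p %| q) ->
  periodic_point_of_period f x p \/ periodic_point_of_period f x (2 * p).
Proof.
move=> p_gt0 fix_2p dvd_fix; have [fix_p|nfix_p] := classic (iter p f x = x).
  by left; apply: period_of_dvd.
right; split; first by rewrite muln_gt0.
split=> // q q_gt0 lt_q fix_q; have /dvdnP[m def_q] := dvd_fix q fix_q.
have q_eq_p : q = p by rewrite def_q (_ : m = 1) ?mul1n //; nia.
by apply: nfix_p; rewrite -q_eq_p.
Qed.

Section Eta.

Variables (k : nat) (w : k.-tuple bool).

Local Notation K := (2 ^ k).
Local Notation c := (prefix_val k (block_zero w)).

Definition eta_map (x : Sigma) : Sigma := alpha (tau w x).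

Definition tail_step (t : Sigma) (p : nat) : Sigma :=
  let t' := if p == c then negS t else t in
  if p == K - 1 then alpha t' else t'.

Lemma K_gt0 : 0 < K. Proof. by rewrite expn_gt0. Qed.

Lemma c_lt : c < K. Proof. exact: prefix_val_lt. Qed.

Lemma tau_lt x i : i < k -> tau w x i = x i.
Proof. by move=> lt_ik; rewrite /tau; case: in_cyl; rewrite ?lt_ik. Qed.

Lemma prefix_val_tau x : prefix_val k (tau w x) = prefix_val k x.
Proof. by apply: eq_prefix_val => i /tau_lt. Qed.

Lemma in_cylE x : in_cyl w x = (prefix_val k x == c).
Proof.
apply/allP/eqP => [x_w|/prefix_val_inj eq_pre i].
  apply: eq_prefix_val => i lt_ik.
  have /eqP -> : x i == nth false w i by apply: x_w; rewrite mem_iota.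
  by rewrite /block_zero lt_ik.
by rewrite mem_iota add0n => /andP[_ lt_ik]; rewrite eq_pre // /block_zero lt_ik.
Qed.

Lemma tau_involutive : involutive (tau w).
Proof.
move=> x; have cyl_tau : in_cyl w (tau w x) = in_cyl w x by rewrite !in_cylE prefix_val_tau.
apply: functional_extensionality => i; rewrite {1}/tau cyl_tau /tau.
by case: (in_cyl w x) => //; case: (i < k); rewrite ?negbK.
Qed.

Lemma shift_tau x :
  shift k (tau w x) = if in_cyl w x then negS (shift k x) else shift k x.
Proof.
rewrite /tau; case: in_cyl => //; apply: functional_extensionality => i.
by rewrite /shift /negS ltnNge leq_addr.
Qed.

Lemma eta_continuous : continuous_Sigma eta_map.
Proof.
move=> x N; exists (N + k) => y eq_xy i lt_iN.
have eq_cyl : in_cyl w y = in_cyl w x.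
  by rewrite !in_cylE (@eq_prefix_val k y x) // => j lt_jk; apply: eq_xy; lia.
have eq_tau j : j < N + k -> tau w y j = tau w x j.
  by move=> lt_j; rewrite /tau eq_cyl; case: in_cyl; rewrite eq_xy.
rewrite /eta_map /alpha eq_tau; last by lia.
by rewrite (@eq_all_iota0 i (tau w y) (tau w x)) // => j lt_ji; apply: eq_tau; lia.
Qed.

Lemma eta_surj x : eta_map (tau w (negS (alpha (negS x)))) = x.
Proof. by rewrite /eta_map tau_involutive; apply: alpha_negS_involutive. Qed.

Lemma prefix_val_iter_eta n x :
  prefix_val k (iter n eta_map x) = (prefix_val k x + n) %% K.
Proof.
elim: n => [|n IH]; first by rewrite addn0 modn_small // prefix_val_lt.
by rewrite iterS prefix_val_alpha prefix_val_tau IH -addn1 modnDml addn1 addnS.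
Qed.

Lemma shift_eta x : shift k (eta_map x) = tail_step (shift k x) (prefix_val k x).
Proof.
rewrite /eta_map shift_alpha shift_tau /tail_step -in_cylE.
by rewrite (@eq_all_iota0 _ _ x) ?all_prefixE // => i /tau_lt.
Qed.

Lemma iter_eta_fixed_dvd x q : iter q eta_map x = x -> K %| q.
Proof.
move/(congr1 (prefix_val k)); rewrite prefix_val_iter_eta => fix_pre.
have /eqP : prefix_val k x + q = prefix_val k x + 0 %[mod K].
  by rewrite fix_pre addn0 modn_small // prefix_val_lt.
by rewrite eqn_modDl mod0n.
Qed.

Lemma iter_eta_from_prefix0 x :
  exists2 y, prefix_val k y = 0 & iter (prefix_val k x) eta_map y = x.
Proof.
have iter_surj n z : exists y, iter n eta_map y = z.
  elim: n z => [|n IH] z; first by exists z.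
  have [y iter_y] := IH (tau w (negS (alpha (negS z)))).
  by exists y; rewrite iterS iter_y eta_surj.
have [y iter_y] := iter_surj (prefix_val k x) x; exists y => //.
have /eqP : prefix_val k y + prefix_val k x = 0 + prefix_val k x %[mod K].
  by rewrite -prefix_val_iter_eta iter_y !modn_small ?prefix_val_lt.
by rewrite eqn_modDr mod0n modn_small ?prefix_val_lt //; move/eqP.
Qed.

Section FromPrefix0.

Variables (x : Sigma) (x_pre0 : prefix_val k x = 0).

Lemma prefix_val_iter_eta0 m : m < K -> prefix_val k (iter m eta_map x) = m.
Proof. by move=> lt_mK; rewrite prefix_val_iter_eta x_pre0 modn_small. Qed.

Lemma shift_iter_eta0S m : m < K ->
  shift k (iter m.+1 eta_map x) = tail_step (shift k (iter m eta_map x)) m.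
Proof. by move=> lt_mK; rewrite iterS shift_eta prefix_val_iter_eta0. Qed.

Lemma shift_iter_eta0_const s e : s <= e <= K ->
  (forall m, s <= m < e -> (m != c) && (m != K - 1)) ->
  shift k (iter e eta_map x) = shift k (iter s eta_map x).
Proof.
move=> /andP[le_se le_eK] quiet; rewrite -(subnKC le_se) in le_eK quiet *.
elim: (e - s) le_eK quiet => [|n IH] le_nK quiet; first by rewrite addn0.
have /andP[ne_c ne_last] := quiet (s + n) ltac:(lia).
rewrite addnS shift_iter_eta0S; last by lia.
rewrite /tail_step (negbTE ne_c) (negbTE ne_last) IH //; first by lia.
by move=> m lt_m; apply: quiet; lia.
Qed.

Lemma shift_iter_eta0_round : shift k (iter K eta_map x) = alpha (negS (shift k x)).
Proof.
have lt_c := c_lt; have def_K : K = (K - 1).+1 by have := K_gt0; lia.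
have shift_c : shift k (iter c eta_map x) = shift k x.
  rewrite (@shift_iter_eta0_const 0) //; first by lia.
  by move=> m lt_m; apply/andP; split; apply/eqP; lia.
rewrite {1}def_K shift_iter_eta0S; last by lia.
have [c_last|c_not_last] := eqVneq c (K - 1).
  by rewrite -c_last shift_c /tail_step -c_last !eqxx.
have shift_last : shift k (iter (K - 1) eta_map x) = negS (shift k x).
  rewrite (@shift_iter_eta0_const c.+1).
  - by rewrite shift_iter_eta0S // shift_c /tail_step eqxx (negbTE c_not_last).
  - by apply/andP; split; lia.
  by move=> m lt_m; apply/andP; split; apply/eqP; lia.
by rewrite shift_last /tail_step eqxx eq_sym (negbTE c_not_last).
Qed.

End FromPrefix0.

Lemma iter_eta_double x : iter (2 * K) eta_map x = x.
Proof.
have [y y_pre0 <-] := iter_eta_from_prefix0 x.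
rewrite -iterD addnC iterD; congr (iter _ eta_map _).
have round_pre0 : prefix_val k (iter K eta_map y) = 0.
  by rewrite prefix_val_iter_eta y_pre0 modnn.
rewrite mul2n -addnn iterD; apply: (@prefix_shift_ext k).
  by rewrite prefix_val_iter_eta round_pre0 modnn.
by rewrite !shift_iter_eta0_round //; apply: alpha_negS_involutive.
Qed.

Lemma iter_eta_zero_round : iter K eta_map zeroS = zeroS.
Proof.
apply: (@prefix_shift_ext k); first by rewrite prefix_val_iter_eta prefix_val_zero modnn.
rewrite shift_iter_eta0_round ?prefix_val_zero //; apply: functional_extensionality => i.
by rewrite /alpha /negS /shift /zeroS /= (eq_all (a2 := predT)) ?all_predT.
Qed.

Lemma iter_eta_zero_block : iter c eta_map zeroS = block_zero w.
Proof.
have lt_c := c_lt.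
apply: (@prefix_shift_ext k).
  by rewrite prefix_val_iter_eta prefix_val_zero add0n modn_small.
rewrite (@shift_iter_eta0_const _ _ 0) ?prefix_val_zero //; first 1 last.
- by rewrite leq0n; apply: ltnW.
- by move=> m lt_m; apply/andP; split; apply/eqP; lia.
by apply: functional_extensionality => i; rewrite /shift /block_zero ltnNge leq_addr.
Qed.

Lemma eta_orbit_zero_cyl y :
  in_eta_orbit eta_map zeroS y /\ in_cyl w y <-> y = block_zero w.
Proof.
split=> [[[j ->]]|->]; last first.
  by split; [exists c; rewrite iter_eta_zero_block | rewrite in_cylE].
rewrite in_cylE prefix_val_iter_eta prefix_val_zero add0n => /eqP j_mod.
rewrite -iter_eta_zero_block -j_mod {1}(divn_eq j K) addnC iterD iterM.
by rewrite (iter_fix _ iter_eta_zero_round).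
Qed.

End Eta.

Theorem mainTheorem4 (k : nat) (hk : 0 < k) (w : k.-tuple bool) :
  let eta := fun x : Sigma => alpha (tau w x) in
  continuous_Sigma eta /\
  (periodic_point_of_period eta zeroS (2 ^ k) /\
   (forall y : Sigma, in_eta_orbit eta zeroS y /\ in_cyl w y <-> y = block_zero w)) /\
  (forall x : Sigma, eventually_constant x ->
     periodic_point eta x /\
     ((periodic_point_of_period eta x (2 ^ k) /\ in_eta_orbit eta zeroS x) \/
      (exists m : nat, 0 < m /\ periodic_point_of_period eta x (m * 2 ^ k)))).
Proof.
move=> eta; have K_pos := K_gt0 k.
split; first exact: eta_continuous.
split.
  split; last exact: eta_orbit_zero_cyl.
  apply: period_of_dvd => //; [exact: iter_eta_zero_round | exact: iter_eta_fixed_dvd].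
move=> x _; split.
  by exists (2 * 2 ^ k); rewrite muln_gt0 K_pos iter_eta_double.
right; have [period_K|period_2K] :=
  @period_or_double eta x _ K_pos (@iter_eta_double k w x) (@iter_eta_fixed_dvd k w x).
- by exists 1; rewrite mul1n.
- by exists 2.
Qed.
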